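(* Let $\vec{s}(x,y)=(x,y,\zeta(x,y))^{\mathsf T}$ be a smooth Monge-patch parametrization of a surface over the image plane, and fix an image point at which the slant satisfies $0\le\sigma<\pi/2$. Let $\mathcal{D}\vec{s}=U\Sigma V^{\mathsf T}$ be the singular value decomposition of the $3\times 2$ Jacobian $\mathcal{D}\vec{s}$, where $U$ is $3\times 2$ with orthonormal columns spanning the tangent plane (first column: the unit tangent vector in the direction of maximal slant, i.e. the tilt direction lifted to the surface), $\Sigma=\begin{pmatrix}\frac{1}{\cos\sigma}&0\\0&1\end{pmatrix}$, and $V$ is the $2\times 2$ rotation matrix by the tilt angle $\tau$ (its first column is the tilt direction in the image). Let $W$ be the $2\times 2$ orthogonal matrix whose columns are the principal directions expressed in the orthonormal tangent-plane basis given by the columns of $U$, and $K=\operatorname{diag}(\kappa_1,\kappa_2)$ the diagonal matrix of the corresponding principal curvatures, with $\kappa_1\kappa_2\neq 0$. Then the $3\times 2$ Jacobian $\mathcal{D}\vec{n}$ of the unit normal field $\vec{n}$ (as a function of image position) and its Moore–Penrose pseudo-inverse satisfy $$\mathcal{D}\vec{n}=U W K W^{\mathsf T}\Sigma V^{\mathsf T},\qquad \mathcal{D}\vec{n}^{+}=V\Sigma^{-1}WK^{-1}W^{\mathsf T}U^{\mathsf T}.$$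
   Context: The unit normal is $\vec{n}(x,y)=\frac{\vec{s}_x\times\vec{s}_y}{\|\vec{s}_x\times\vec{s}_y\|}$, viewed as a map from the image plane to the unit sphere; $\mathcal{D}\vec{n}$ is its $3\times2$ Jacobian with respect to image coordinates $(x,y)$. The Gauss map $\tilde{\vec{n}}$ sends a surface point to its unit normal; its differential $\mathcal{D}\tilde{\vec{n}}$ (shape operator) is a self-adjoint linear map of the tangent plane; the principal curvatures $\kappa_1,\kappa_2$ are its eigenvalues and the principal directions are its orthonormal eigenvectors. Slant $\sigma$ is the angle between the surface normal and the viewing ($z$) axis; tilt $\tau$ is the image direction of the gradient of $\zeta$. $A^{+}$ denotes the Moore–Penrose pseudo-inverse. *)

From HB Require Import structures.
From mathcomp Require Import all_boot all_order all_algebra.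
From mathcomp Require Import all_classical all_reals all_analysis.
Set Implicit Arguments. Unset Strict Implicit. Unset Printing Implicit Defensive.
Import Order.TTheory GRing.Theory Num.Theory.
Import numFieldNormedType.Exports.
Local Open Scope ring_scope.

Section Defs.
Variable R : realType.

Definition partial_x (f : R -> R -> R) (x y : R) : R := derive1 (fun t => f t y) x.
Definition partial_y (f : R -> R -> R) (x y : R) : R := derive1 (fun t => f x t) y.

Fixpoint Ck (k : nat) (f : R -> R -> R) : Prop :=
  match k with
  | 0 => continuous (fun p : R * R => f p.1 p.2)
  | k'.+1 => continuous (fun p : R * R => f p.1 p.2) /\
      (forall x y, derivable (fun t => f t y) x 1 /\ derivable (fun t => f x t) y 1) /\
      Ck k' (partial_x f) /\ Ck k' (partial_y f)
  end.

Definition smooth2 (f : R -> R -> R) : Prop := forall k, Ck k f.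

Definition jac32 (F : R -> R -> 'cV[R]_3) (x y : R) : 'M[R]_(3, 2) :=
  \matrix_(i < 3, j < 2)
    if j == ord0 then partial_x (fun a b => F a b i ord0) x y
    else partial_y (fun a b => F a b i ord0) x y.

Definition monge (zeta : R -> R -> R) (x y : R) : 'cV[R]_3 :=
  \col_(i < 3) (if i == 0%N :> nat then x else if i == 1%N :> nat then y else zeta x y).

Definition cross (u v : 'cV[R]_3) : 'cV[R]_3 :=
  \col_(i < 3)
    (if i == 0%N :> nat then u (inord 1) ord0 * v (inord 2) ord0 - u (inord 2) ord0 * v (inord 1) ord0
     else if i == 1%N :> nat then u (inord 2) ord0 * v (inord 0) ord0 - u (inord 0) ord0 * v (inord 2) ord0
     else u (inord 0) ord0 * v (inord 1) ord0 - u (inord 1) ord0 * v (inord 0) ord0).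

Definition vnorm (u : 'cV[R]_3) : R := Num.sqrt (\sum_(i < 3) u i ord0 ^+ 2).

Definition unit_normal (zeta : R -> R -> R) (x y : R) : 'cV[R]_3 :=
  let Ds := jac32 (monge zeta) x y in
  let c := cross (col ord0 Ds) (col (inord 1) Ds) in
  (vnorm c)^-1 *: c.

(* S is the matrix, in the orthonormal tangent basis given by the columns of U,
   of the differential of the Gauss map (shape operator): the tangent vector
   with U-coordinates a, i.e. U a = Ds v, is sent to Dn v (= D(n~ o s) v). *)
Definition shape_matrix (Dn Ds U : 'M[R]_(3, 2)) (S : 'M[R]_2) : Prop :=
  forall v a : 'cV[R]_2, Ds *m v = U *m a -> Dn *m v = U *m (S *m a).

Definition diag2 (a b : R) : 'M[R]_2 :=
  \matrix_(i < 2, j < 2) (if i == j then (if i == ord0 then a else b) else 0).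

Definition rot2 (t : R) : 'M[R]_2 :=
  \matrix_(i < 2, j < 2)
    (if i == ord0 then (if j == ord0 then cos t else - sin t)
     else (if j == ord0 then sin t else cos t)).


Definition principal_frame (Dn Ds U : 'M[R]_(3, 2)) (W : 'M[R]_2) (k1 k2 : R) : Prop :=
  W^T *m W = 1%:M /\
  (exists S : 'M[R]_2, [/\ shape_matrix Dn Ds U S,
    S *m col ord0 W = k1 *: col ord0 W & S *m col (inord 1) W = k2 *: col (inord 1) W]).

Definition is_pinv (m n : nat) (A : 'M[R]_(m, n)) (B : 'M[R]_(n, m)) : Prop :=
  [/\ A *m B *m A = A, B *m A *m B = B, (A *m B)^T = A *m B & (B *m A)^T = B *m A].

End Defs.

(** Since [Ds = U (Sigma V^T)], every image displacement [v] moves the surface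
    point along the tangent vector with [U]-coordinates [Sigma V^T v], so the
    defining property of the shape operator [S] gives [Dn = U S Sigma V^T].
    The principal frame diagonalises [S] orthogonally, [S = W K W^T], which is
    the first identity.  For the second, [Dn] is an isometric embedding [U]
    composed with an invertible square factor [M = W K W^T Sigma V^T]; the
    Penrose conditions for [M^-1 U^T] then reduce to [U^T U = 1], and [M^-1] is
    read off factor by factor, [W] and [V] being orthogonal. *)

From HB Require Import structures.
From mathcomp Require Import all_boot all_order all_algebra.
From mathcomp Require Import all_classical all_reals all_analysis.
From mathcomp Require Import lra.
Set Implicit Arguments. Unset Strict Implicit. Unset Printing Implicit Defensive.
Import Order.TTheory GRing.Theory Num.Theory.
Local Open Scope ring_scope.

Section RingMatrices.
Variable R : pzRingType.

Lemma col_matrixP m n (A B : 'M[R]_(m, n)) : (forall j, col j A = col j B) -> A = B.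
Proof. by move=> eqAB; apply/trmx_inj/row_matrixP => j; rewrite -!tr_col eqAB. Qed.

Lemma mulmx_cV_inj m n (A B : 'M[R]_(m, n)) :
  (forall v : 'cV_n, A *m v = B *m v) -> A = B.
Proof. by move=> eqAB; apply: col_matrixP => j; rewrite !colE eqAB. Qed.

Lemma mulmx_rightK m n p (A : 'M[R]_(n, p)) (B : 'M[R]_(p, n)) (C : 'M[R]_(m, n)) :
  A *m B = 1%:M -> C *m A *m B = C.
Proof. by move=> AB1; rewrite -mulmxA AB1 mulmx1. Qed.

End RingMatrices.

Lemma orthogonal_eigendecomposition (R : comPzRingType) n (S W D : 'M[R]_n) :
  W^T *m W = 1%:M -> S *m W = W *m D -> S = W *m D *m W^T.
Proof. by move=> WtW SW; rewrite -SW -mulmxA (mulmx1C WtW) mulmx1. Qed.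

Lemma ord2_cases (j : 'I_2) : j = ord0 \/ j = inord 1.
Proof.
case: j => [[|[|//]] lt_j2]; [left | right]; apply/val_inj => //.
by rewrite /= inordK.
Qed.

Section PlaneMatrices.
Variable R : realType.

Lemma diag2E (a b : R) : diag2 a b = diag_mx (\row_j (if j == ord0 then a else b)).
Proof.
by apply/matrixP => i j; rewrite !mxE; case: (i == j); rewrite ?mulr1n.
Qed.

Lemma diag2_unitmx (a b : R) : (diag2 a b \in unitmx) = (a * b != 0).
Proof.
by rewrite unitmxE diag2E det_diag unitfE !big_ord_recr big_ord0 !mxE /= mul1r.
Qed.

Lemma rot2_orthogonal (t : R) : rot2 t *m (rot2 t)^T = 1%:M.
Proof.
have := cos2Dsin2 t; rewrite !expr2 => cs.
apply/matrixP => i j; rewrite !mxE !big_ord_recr big_ord0 /= add0r !mxE.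
by case: i => [[|[|//]] ?]; case: j => [[|[|//]] ?]; rewrite /=; lra.
Qed.

Lemma eigencols_mulmx (S W : 'M[R]_2) (k1 k2 : R) :
    S *m col ord0 W = k1 *: col ord0 W ->
    S *m col (inord 1) W = k2 *: col (inord 1) W ->
  S *m W = W *m diag2 k1 k2.
Proof.
move=> S0 S1; apply: col_matrixP => j.
have -> : col j (W *m diag2 k1 k2) = (if j == ord0 then k1 else k2) *: col j W.
  by apply/matrixP => i l; rewrite diag2E mul_mx_diag !mxE mulrC.
have ne10 : (inord 1 : 'I_2) != ord0 by rewrite -val_eqE /= inordK.
by rewrite colE -mulmxA -colE; case: (ord2_cases j) => ->; rewrite ?(negPf ne10).
Qed.

Lemma shape_matrix_factor (Dn U : 'M[R]_(3, 2)) (B S : 'M[R]_2) :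
  shape_matrix Dn (U *m B) U S -> Dn = U *m S *m B.
Proof.
move=> shapeS; apply: mulmx_cV_inj => v; rewrite -!mulmxA.
by apply: shapeS; rewrite mulmxA.
Qed.

Lemma principal_frame_jacobian (Dn U : 'M[R]_(3, 2)) (B W : 'M[R]_2) (k1 k2 : R) :
  principal_frame Dn (U *m B) U W k1 k2 -> Dn = U *m W *m diag2 k1 k2 *m W^T *m B.
Proof.
case=> WtW [S [shapeS S0 S1]].
have SE := orthogonal_eigendecomposition WtW (eigencols_mulmx S0 S1).
by rewrite (shape_matrix_factor shapeS) SE !mulmxA.
Qed.

Lemma is_pinv_isometry_mul m n (U : 'M[R]_(m, n)) (M N : 'M[R]_n) :
  U^T *m U = 1%:M -> N *m M = 1%:M -> is_pinv (U *m M) (N *m U^T).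
Proof.
move=> UtU NM.
have AB : U *m M *m (N *m U^T) = U *m U^T.
  by rewrite mulmxA (mulmx_rightK _ (mulmx1C NM)).
have BA : N *m U^T *m (U *m M) = 1%:M by rewrite mulmxA (mulmx_rightK _ UtU).
split; rewrite ?AB ?BA ?mul1mx ?trmx1 //.
- by rewrite mulmxA (mulmx_rightK _ UtU).
- by rewrite trmx_mul trmxK.
Qed.

End PlaneMatrices.

Theorem mainTheorem1 (R : realType) (zeta : R -> R -> R) (x0 y0 : R)
    (sigma tau : R) (U : 'M[R]_(3, 2)) (W : 'M[R]_2) (kappa1 kappa2 : R) :
  smooth2 zeta ->
  (* slant: angle between the unit normal and the viewing (z) axis *)
  0 <= sigma < pi / 2 ->
  cos sigma = unit_normal zeta x0 y0 (inord 2) ord0 ->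
  (* tilt: image direction of the gradient of zeta *)
  let zx := partial_x zeta x0 y0 in
  let zy := partial_y zeta x0 y0 in
  zx = Num.sqrt (zx ^+ 2 + zy ^+ 2) * cos tau ->
  zy = Num.sqrt (zx ^+ 2 + zy ^+ 2) * sin tau ->
  let Ds := jac32 (monge zeta) x0 y0 in
  let Dn := jac32 (unit_normal zeta) x0 y0 in
  let Sigma := diag2 (cos sigma)^-1 1 in
  let V := rot2 tau in
  (* SVD of Ds, U with orthonormal columns *)
  U^T *m U = 1%:M ->
  Ds = U *m Sigma *m V^T ->
  (* principal directions / curvatures in the U-basis *)
  principal_frame Dn Ds U W kappa1 kappa2 ->
  kappa1 * kappa2 != 0 ->
  let K := diag2 kappa1 kappa2 in
  Dn = U *m W *m K *m W^T *m Sigma *m V^T /\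
  is_pinv Dn (V *m invmx Sigma *m W *m invmx K *m W^T *m U^T).
Proof.
(* The slant and tilt equations only pin down the SVD factors, which are
   given; of the slant we need just [sigma < pi/2], to invert [Sigma]. *)
move=> _ /andP[sigma_ge0 sigma_lt] _ _ _ _ _ Ds Dn Sigma V UtU DsE frame k12 K.
rewrite DsE -mulmxA in frame.
have DnE : Dn = U *m W *m K *m W^T *m Sigma *m V^T.
  by rewrite (principal_frame_jacobian frame) !mulmxA.
split=> //.
have cos_sigma_gt0 : 0 < cos sigma.
  rewrite cos_gt0_pihalf // sigma_lt andbT (lt_le_trans _ sigma_ge0) //.
  by rewrite oppr_lt0 divr_gt0 ?pi_gt0.
have Sigma_unit : Sigma \in unitmx by rewrite diag2_unitmx mulr1 invr_eq0 gt_eqF.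
have K_unit : K \in unitmx by rewrite diag2_unitmx.
have WtW := frame.1; have WWt := mulmx1C WtW.
have -> : Dn = U *m (W *m K *m W^T *m Sigma *m V^T) by rewrite DnE !mulmxA.
apply: is_pinv_isometry_mul => //.
rewrite !mulmxA (mulmx_rightK _ WtW) (mulmx_rightK _ (mulVmx K_unit)).
by rewrite (mulmx_rightK _ WWt) (mulmx_rightK _ (mulVmx Sigma_unit)) rot2_orthogonal.
Qed.
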